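(* Let $\theta>0$, $n\ge2$, $b\in\{2,\ldots,n\}$, and integers $r_2,\ldots,r_b\ge0$ with $m:=2r_2+3r_3+\cdots+br_b$. Then $$\mathbb{E}\Big(\tilde C_2(n)^{[r_2]}\cdots\tilde C_b(n)^{[r_b]}\Big)=\mathbf{1}(m\le n)\,\frac{n!}{\lambda_n(\theta)\,\theta_{(n)}}\cdot\frac{\lambda_{n-m}(\theta)\,\theta_{(n-m)}}{(n-m)!}\prod_{j=2}^b\Big(\frac{\theta}{j}\Big)^{r_j}.$$ In particular, for $j=2,\ldots,n$, $\mathbb{E}\tilde C_j(n)=\frac{n!}{\lambda_n(\theta)\theta_{(n)}}\cdot\frac{\lambda_{n-j}(\theta)\theta_{(n-j)}}{(n-j)!}\cdot\frac{\theta}{j}$.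
   Context: Fix $\theta>0$. Write $\theta_{(0)}=1$ and $\theta_{(m)}=\theta(\theta+1)\cdots(\theta+m-1)$ for $m\ge1$. $\mathrm{ESF}(\theta)$ is the law of $(C_1(n),\ldots,C_n(n))$ with $\mathbb{P}(C_j(n)=c_j,\,1\le j\le n)=\frac{n!}{\theta_{(n)}}\prod_{j=1}^n(\theta/j)^{c_j}/c_j!$ whenever $\sum_j jc_j=n$ (cycle counts of a random permutation of $\{1,\ldots,n\}$ chosen with probability $\theta^k/\theta_{(n)}$ when it has $k$ cycles). For $n\ge1$, $\lambda_n(\theta)=\mathbb{P}(C_1(n)=0)=\frac{n!}{\theta_{(n)}}\sum_{j=0}^n(-1)^j\frac{\theta^j}{j!}\frac{\theta_{(n-j)}}{(n-j)!}$, and $\lambda_0(\theta)=1$ (so $\lambda_1(\theta)=0$). The derangement cycle counts $(\tilde C_2(n),\ldots,\tilde C_n(n))$ have the law of $(C_2(n),\ldots,C_n(n))$ conditioned on $C_1(n)=0$. For an integer-valued $X$ and $k\ge0$, $X^{[k]}=X(X-1)\cdots(X-k+1)$ denotes the falling factorial, with $X^{[0]}=1$. *)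

From HB Require Import structures.
From mathcomp Require Import all_boot all_order all_algebra.

Import Order.TTheory GRing.Theory Num.Theory.
Local Open Scope ring_scope.

Definition rising {R : nzRingType} (t : R) (m : nat) : R :=
  \prod_(i < m) (t + i%:R).

(* lambda_n(theta), by the explicit formula (gives lambda_0 = 1, lambda_1 = 0) *)
Definition lambda {R : fieldType} (t : R) (n : nat) : R :=
  n`!%:R / rising t n *
  \sum_(j < n.+1) (-1) ^+ j * (t ^+ j / j`!%:R) * (rising t (n - j) / (n - j)`!%:R).

(* A cycle-count configuration for size n: c i = C_{i+1}(n), i < n.
   (Each C_j(n) <= n, so values in 'I_n.+1 lose nothing.) *)
Definition config (n : nat) := {ffun 'I_n -> 'I_n.+1}.

Definition cnt {n : nat} (c : config n) (j : nat) : nat :=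
  if j is j'.+1 then
    (if (insub j' : option 'I_n) is Some i then nat_of_ord (c i) else 0%N)
  else 0%N.

(* ESF(theta) probability mass function on configurations *)
Definition esf {R : fieldType} (t : R) (n : nat) (c : config n) : R :=
  if (\sum_(i < n) (i.+1 * c i))%N == n then
    n`!%:R / rising t n *
    \prod_(i < n) ((t / i.+1%:R) ^+ (c i) / (c i)`!%:R)
  else 0.


(* Expectation of f(C~_2(n),...,C~_n(n)) for the derangement cycle counts,
   i.e. E[f(C(n)) | C_1(n) = 0] under ESF(theta). f receives j |-> C_j. *)
Definition dexp {R : fieldType} (t : R) (n : nat) (f : (nat -> nat) -> R) : R :=
  (\sum_(c : config n) esf t n c * (cnt c 1 == 0%N)%:R * f (cnt c)) /
  (\sum_(c : config n) esf t n c * (cnt c 1 == 0%N)%:R).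

From HB Require Import structures.
From mathcomp Require Import all_boot all_order all_algebra.
From mathcomp Require Import ring zify.
(* The proof is by generating functions, all compared modulo X^(n+1).
   - Summing a product of per-length weights g_i(c_i) over the configurations
     of total size n gives the n-th coefficient of prod_i sum_x g_i(x) X^(ix)
     ([config_sum_coef]).  For the derangement law the i-th series is the
     truncated exp((theta/i) X^i) (i >= 2) and the constant 1 (i = 1).
   - Weighting by the falling factorial C_j^[r] multiplies the j-th series by
     (theta/j)^r X^(jr) ([texp_ffact]); hence the moment sum is, up to the
     factor n!/theta_(n), the (n-m)-th coefficient of the derangement series
     D = prod_(i>=2) exp((theta/i) X^i) times prod_j (theta/j)^(r_j).
   - D = exp(-theta X) (1-X)^(-theta): the product over all lengths satisfies
     (1-X) X A' = theta X A, so its coefficients are theta_(k)/k!, and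
     exp(-theta X) exp(theta X) = 1.  Therefore the k-th coefficient of D is
     lambda_k theta_(k)/k! ([derangement_gf_lambda]).
   The theorem is the quotient of the moment sum by the total mass (b = 0),
   and its second part is the special case of a single r_j = 1. *)

Set Implicit Arguments.
Unset Strict Implicit.
Unset Printing Implicit Defensive.
Import Order.TTheory GRing.Theory Num.Theory.
Local Open Scope ring_scope.

Section Truncation.
Variables (R : numFieldType) (N : nat).

(* [vanishes p]: every coefficient of p of degree at most N is zero, i.e.
   p = 0 modulo X^(N+1).  Generating functions are only compared in this sense. *)
Definition vanishes (p : {poly R}) : Prop := forall k, (k <= N)%N -> p`_k = 0.

Lemma vanishes0 : vanishes 0.
Proof. by move=> k _; rewrite coef0. Qed.

Lemma vanishesD p q : vanishes p -> vanishes q -> vanishes (p + q).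
Proof. by move=> hp hq k hk; rewrite coefD hp // hq // addr0. Qed.

Lemma vanishesN p : vanishes p -> vanishes (- p).
Proof. by move=> hp k hk; rewrite coefN hp // oppr0. Qed.

Lemma vanishesMl p q : vanishes p -> vanishes (q * p).
Proof.
move=> hp k hk; rewrite coefM big1 // => j _; rewrite hp ?mulr0 //.
exact: leq_trans (leq_subr _ _) hk.
Qed.

Lemma vanishesMr p q : vanishes p -> vanishes (p * q).
Proof. by move=> hp; rewrite mulrC; apply: vanishesMl. Qed.

Lemma vanishes_sum (I : Type) (s : seq I) (P : pred I) (F : I -> {poly R}) :
  (forall i, P i -> vanishes (F i)) -> vanishes (\sum_(i <- s | P i) F i).
Proof.
move=> h; elim/big_rec: _ => [|i p Pi hp]; first exact: vanishes0.
by apply: vanishesD => //; apply: h.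
Qed.

Lemma vanishesXn e p : (N < e)%N -> vanishes ('X^e * p).
Proof. by move=> he k hk; rewrite coefXnM ifT //; lia. Qed.

Lemma vanishes_coef {p q : {poly R}} {k : nat} :
  vanishes (p - q) -> (k <= N)%N -> p`_k = q`_k.
Proof. by move=> hpq hk; apply/eqP; rewrite -subr_eq0 -coefB hpq. Qed.

Lemma vanishes_prod (I : Type) (s : seq I) (p q : I -> {poly R}) :
  (forall i, vanishes (p i - q i)) ->
  vanishes (\prod_(i <- s) p i - \prod_(i <- s) q i).
Proof.
move=> h; elim: s => [|i s IH]; first by rewrite !big_nil subrr; apply: vanishes0.
rewrite !big_cons.
have -> : p i * \prod_(j <- s) p j - q i * \prod_(j <- s) q j
  = (p i - q i) * \prod_(j <- s) p j + q i * (\prod_(j <- s) p j - \prod_(j <- s) q j).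
  by ring.
by apply: vanishesD; [apply: vanishesMr | apply: vanishesMl].
Qed.

Lemma vanishes_prod_Xderiv (I : Type) (s : seq I) (p u : I -> {poly R}) :
  (forall i, vanishes ('X * (p i)^`() - u i * p i)) ->
  vanishes ('X * (\prod_(i <- s) p i)^`() - (\sum_(i <- s) u i) * \prod_(i <- s) p i).
Proof.
move=> h; elim: s => [|i s IH].
  by rewrite !big_nil -polyC1 derivC mulr0 mul0r subrr; apply: vanishes0.
rewrite !big_cons derivM.
set P := \prod_(j <- s) p j; set U := \sum_(j <- s) u j.
have -> : 'X * ((p i)^`() * P + p i * P^`()) - (u i + U) * (p i * P)
   = ('X * (p i)^`() - u i * p i) * P + p i * ('X * P^`() - U * P) by ring.
by apply: vanishesD; [apply: vanishesMr | apply: vanishesMl].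
Qed.

Lemma natr_fact_neq0 k : (k`!)%:R != 0 :> R.
Proof. by rewrite pnatr_eq0 -lt0n fact_gt0. Qed.

Definition ecoef (a : R) (x : nat) : R := a ^+ x / x`!%:R.

Definition texp (a : R) (s B : nat) : {poly R} :=
  \sum_(0 <= x < B) ecoef a x *: 'X^(s * x).

Lemma ecoefS a x : ecoef a x.+1 * x.+1%:R = a * ecoef a x.
Proof.
have x1 : x.+1%:R != 0 :> R by rewrite pnatr_eq0.
have xf := natr_fact_neq0 x.
by rewrite /ecoef factS natrM exprS; field; rewrite xf addrC natr1.
Qed.

Lemma ecoef_ffact a x r : ecoef a (x + r) * ((x + r) ^_ r)%:R = a ^+ r * ecoef a x.
Proof.
have fact_split := ffact_fact (leq_addl x r); rewrite addnK in fact_split.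
have xf := natr_fact_neq0 x; have yf := natr_fact_neq0 (x + r).
rewrite /ecoef -fact_split natrM exprD in yf *.
move: yf; set F := ((x + r) ^_ r)%:R; set G := (x`!)%:R => yf.
have Fn : F != 0 by apply: contraNneq yf => ->; rewrite mul0r.
by field; rewrite Fn xf.
Qed.

Lemma vanishes_tail (f : nat -> R) s B B' : (0 < s)%N -> (N < B)%N -> (B <= B')%N ->
  vanishes (\sum_(0 <= x < B') f x *: 'X^(s * x) - \sum_(0 <= x < B) f x *: 'X^(s * x)).
Proof.
move=> s0 NB BB'; rewrite (@big_cat_nat _ _ _ B) // addrC addKr big_seq.
apply: vanishes_sum => x; rewrite mem_index_iota => /andP[Bx _] k kN.
rewrite coefZ coefXn [k == _](_ : _ = false) ?mulr0 //; apply/eqP => ksx.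
have : (x <= s * x)%N by rewrite leq_pmull.
lia.
Qed.

Lemma texp_ffact a s B r :
  \sum_(0 <= x < B + r) (ecoef a x * (x ^_ r)%:R) *: 'X^(s * x)
  = a ^+ r *: ('X^(s * r) * texp a s B).
Proof.
rewrite (@big_cat_nat _ _ _ r) ?leq_addl // big_nat_cond big1; last first.
  by move=> x /andP[/andP[_ xr] _]; rewrite ffact_small // mulr0 scale0r.
rewrite Monoid.mul1m -{1}(add0n r) big_addn addnK /texp mulr_sumr scaler_sumr.
apply: eq_bigr => x _; rewrite ecoef_ffact -scalerA -scalerAr -exprD.
by congr (_ *: (_ *: 'X^_)); ring.
Qed.

Lemma texp_Xderiv a s : (0 < s)%N ->
  vanishes ('X * (texp a s N.+1)^`() - (a * s%:R) *: ('X^s * texp a s N.+1)).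
Proof.
move=> s0; set E := texp a s N.+1.
have XdE : 'X * E^`() = \sum_(0 <= x < N.+1) (ecoef a x * (s * x)%:R) *: 'X^(s * x).
  rewrite /E /texp linear_sum mulr_sumr; apply: eq_bigr => x _ /=.
  rewrite linearZ /= -scalerAr -scalerA scaler_nat; congr (_ *: _).
  case: (s * x)%N => [|e]; first by rewrite expr0 derivC mulr0 mulr0n.
  by rewrite derivXn /= mulrnAr -exprS.
have shifted : \sum_(0 <= x < N) (ecoef a x.+1 * (s * x.+1)%:R) *: 'X^(s * x.+1)
    = (a * s%:R) *: ('X^s * texp a s N).
  rewrite /texp mulr_sumr scaler_sumr; apply: eq_bigr => x _.
  rewrite natrM mulrA mulrAC ecoefS -scalerAr -exprD scalerA mulnS.
  by congr (_ *: _); ring.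
rewrite XdE big_nat_recl // muln0 mulr0 scale0r add0r shifted -scalerBr -mulrBr.
rewrite -mul_polyC; apply: vanishesMl.
rewrite /E /texp big_nat_recr //= opprD addrA subrr add0r mulrN; apply: vanishesN.
rewrite -scalerAr -exprD -mul_polyC mulrC; apply: vanishesXn.
have : (N.+1 <= s * N.+1)%N by rewrite leq_pmull.
lia.
Qed.

Lemma texp_coef0 a s B : (0 < s)%N -> (0 < B)%N -> (texp a s B)`_0 = 1.
Proof.
move=> s0; case: B => // B _; rewrite /texp big_nat_recl // coefD coefZ muln0.
rewrite coefXn eqxx mulr1 /ecoef expr0 fact0 divr1 coef_sum big1 ?addr0 // => i _.
by rewrite coefZ coefXn eq_sym muln_eq0 /= (negbTE (lt0n_neq0 s0)) mulr0.
Qed.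

Lemma texp1_coef a B j : (j < B)%N -> (texp a 1 B)`_j = ecoef a j.
Proof.
move=> jB; rewrite /texp coef_sum (bigD1_seq j) ?iota_uniq ?mem_index_iota //=.
rewrite coefZ mul1n coefXn eqxx mulr1 big1 ?addr0 // => i ij.
by rewrite coefZ mul1n coefXn eq_sym (negbTE ij) mulr0.
Qed.

(* exp(-t X) exp(t X) = 1: the product has constant term 1 and X u' = 0. *)
Lemma texp_inverse t : vanishes (texp (- t) 1 N.+1 * texp t 1 N.+1 - 1).
Proof.
set Q := texp (- t) 1 N.+1; set E := texp t 1 N.+1.
have dQ : vanishes ('X * Q^`() + t *: ('X * Q)).
  by have := @texp_Xderiv (- t) 1 isT; rewrite mulr1 expr1 scaleNr opprK.
have dE : vanishes ('X * E^`() - t *: ('X * E)).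
  by have := @texp_Xderiv t 1 isT; rewrite mulr1 expr1.
have dQE : vanishes ('X * (Q * E)^`()).
  have -> : 'X * (Q * E)^`()
    = ('X * Q^`() + t *: ('X * Q)) * E + Q * ('X * E^`() - t *: ('X * E)).
    by rewrite derivM -!mul_polyC; ring.
  by apply: vanishesD; [apply: vanishesMr | apply: vanishesMl].
move=> k kN; rewrite coefB coef1; case: k kN => [|k] kN.
  by rewrite coef0M /Q /E !texp_coef0 // mulr1 subrr.
have := dQE k.+1 kN; rewrite coefXM /= coef_deriv => /eqP.
by rewrite mulrn_eq0 /= => /eqP ->; rewrite subrr.
Qed.

Definition cycle_factor (t : R) (i : nat) : {poly R} := texp (t / i.+1%:R) i.+1 N.+1.

Definition all_cycles (t : R) : {poly R} := \prod_(i < N) cycle_factor t i.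

Definition derangement_gf (t : R) : {poly R} :=
  \prod_(i < N) (if (i : nat) == 0%N then 1 else cycle_factor t i).

Lemma all_cycles_Xderiv t :
  vanishes ('X * (all_cycles t)^`() - (t *: \sum_(i < N) 'X^(i.+1)) * all_cycles t).
Proof.
rewrite scaler_sumr; apply: vanishes_prod_Xderiv => i.
have := @texp_Xderiv (t / i.+1%:R) i.+1 isT.
by rewrite divfK ?pnatr_eq0 // scalerAl.
Qed.

Lemma geometric_sum M : (1 - 'X) * \sum_(i < M) 'X^(i.+1) = 'X - 'X^(M.+1) :> {poly R}.
Proof.
elim: M => [|M IH]; first by rewrite big_ord0 mulr0 expr1 subrr.
by rewrite big_ord_recr /= mulrDr IH (exprS _ M.+1); set y := 'X^(M.+1); ring.
Qed.

(* From (1-X) X A' = t X A: the recurrence (k+1) a_(k+1) = (t+k) a_k. *)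
Lemma all_cycles_rec t k : (k < N)%N ->
  (all_cycles t)`_k.+1 *+ k.+1 = (t + k%:R) * (all_cycles t)`_k.
Proof.
move=> kN; set A := all_cycles t.
have ode : vanishes ((1 - 'X) * ('X * A^`()) - t *: ('X * A)).
  have -> : (1 - 'X) * ('X * A^`()) - t *: ('X * A)
      = (1 - 'X) * ('X * A^`() - (t *: \sum_(i < N) 'X^(i.+1)) * A) - (t *: 'X^(N.+1)) * A.
    rewrite mulrBr !mulrA -scalerAl -scalerAr geometric_sum -!mul_polyC.
    by set y := 'X^(N.+1); ring.
  apply: vanishesD; first by apply: vanishesMl; apply: all_cycles_Xderiv.
  apply: vanishesN; rewrite -mul_polyC -mulrA.
  by apply: vanishesMl; apply: vanishesXn.
have := ode k.+1 kN; rewrite mulrBl mul1r !coefB coefZ !coefXM /= coef_deriv.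
case: k kN => [|k] kN /=.
  by rewrite subr0 addr0 => /eqP; rewrite subr_eq0 mulr1n => /eqP.
rewrite coef_deriv => /eqP; rewrite subr_eq0 subr_eq => /eqP ->.
by rewrite mulrDl mulr_natl.
Qed.

Lemma all_cycles_coef t k : (k <= N)%N -> (all_cycles t)`_k = rising t k / k`!%:R.
Proof.
elim: k => [|k IH] kN.
  rewrite /all_cycles coef0_prod big1 => [|i _]; last exact: texp_coef0.
  by rewrite /rising big_ord0 fact0 divr1.
have rec := all_cycles_rec t kN; rewrite (IH (ltnW kN)) in rec.
have k1 : k.+1%:R != 0 :> R by rewrite pnatr_eq0.
have kf := natr_fact_neq0 k.
apply: (mulIf k1); rewrite mulr_natr rec /rising big_ord_recr /= factS natrM.
by set P := \prod_(i < k) _; field; rewrite kf addrC natr1.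
Qed.

Lemma all_cycles_split t : (0 < N)%N -> all_cycles t = texp t 1 N.+1 * derangement_gf t.
Proof.
move=> N0; rewrite /all_cycles /derangement_gf (bigD1 (Ordinal N0)) //=.
rewrite [in RHS](bigD1 (Ordinal N0)) //= mul1r /cycle_factor divr1.
congr (_ * _); apply: eq_bigr => i i0; rewrite ifF //.
by apply: contraNF i0 => /eqP i0; apply/eqP/val_inj.
Qed.

Lemma derangement_gf_coef t k : (0 < N)%N -> (k <= N)%N ->
  (derangement_gf t)`_k = \sum_(j < k.+1) ecoef (- t) j * (rising t (k - j) / (k - j)`!%:R).
Proof.
move=> N0 kN.
have cancel : vanishes (texp (- t) 1 N.+1 * all_cycles t - derangement_gf t).
  rewrite all_cycles_split // mulrA -{2}(mul1r (derangement_gf t)) -mulrBl.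
  by apply: vanishesMr; apply: texp_inverse.
rewrite -(vanishes_coef cancel kN) coefM; apply: eq_bigr => j _.
by rewrite texp1_coef ?all_cycles_coef //; have := ltn_ord j; lia.
Qed.

End Truncation.

Lemma prod_scale_Xn (R : comNzRingType) (I : Type) (s : seq I) (a : I -> R) (e : I -> nat) :
  \prod_(i <- s) (a i *: 'X^(e i)) = (\prod_(i <- s) a i) *: 'X^(\sum_(i <- s) e i).
Proof.
elim: s => [|i s IH]; first by rewrite !big_nil expr0 scale1r.
by rewrite !big_cons IH -scalerAl -scalerAr scalerA exprD.
Qed.

Lemma config_sum_coef (R : comNzRingType) (n : nat) (g : nat -> nat -> R) :
  \sum_(c : config n) (((\sum_(i < n) i.+1 * c i)%N == n)%:R * \prod_(i < n) g i (c i))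
  = (\prod_(i < n) \sum_(x < n.+1) g i x *: 'X^(i.+1 * x))`_n.
Proof.
rewrite bigA_distr_bigA coef_sum; apply: eq_bigr => c _.
by rewrite prod_scale_Xn coefZ coefXn mulrC eq_sym.
Qed.

Lemma cnt_succ {n : nat} (c : config n) (i : 'I_n) : cnt c i.+1 = c i.
Proof. by rewrite /cnt valK. Qed.

Definition restrict (b : nat) (r : nat -> nat) (j : nat) : nat :=
  if (2 <= j <= b)%N then r j else 0%N.

Lemma big_restrict (T : Type) (idx : T) (op : Monoid.law idx) n b r (F : nat -> nat -> T) :
  (b <= n)%N -> (forall j, F j 0%N = idx) ->
  \big[op/idx]_(i < n) F i.+1 (restrict b r i.+1) = \big[op/idx]_(2 <= j < b.+1) F j (r j).
Proof.
move=> bn F0.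
have -> : \big[op/idx]_(i < n) F i.+1 (restrict b r i.+1)
    = \big[op/idx]_(0 <= j < n.+1) F j (restrict b r j).
  by rewrite big_mkord big_ord_recl F0 Monoid.mul1m.
have bn1 : (b.+1 <= n.+1)%N by rewrite ltnS.
rewrite (big_nat_widen _ _ _ _ _ bn1) (@big_nat_widenl _ _ _ 2 0) // [in RHS]big_mkcond.
by apply: eq_bigr => j _; rewrite /restrict andbC ltnS /=; case: ifP.
Qed.

Section DerangementSums.
Variables (R : numFieldType) (t : R) (n : nat).
Hypothesis n_gt0 : (0 < n)%N.

Definition dweight (H : nat -> nat -> R) (i x : nat) : R :=
  ecoef (t / i.+1%:R) x * (if i == 0%N then (x == 0%N)%:R else 1) * H i x.

Lemma esf_derangement (c : config n) (H : nat -> nat -> R) :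
  esf t n c * (cnt c 1 == 0%N)%:R * \prod_(i < n) H i (c i)
  = n`!%:R / rising t n *
    (((\sum_(i < n) i.+1 * c i)%N == n)%:R * \prod_(i < n) dweight H i (c i)).
Proof.
have no_fixed : ((cnt c 1 == 0%N)%:R : R)
    = \prod_(i < n) (if (i : nat) == 0%N then ((c i : nat) == 0%N)%:R else 1).
  rewrite (bigD1 (Ordinal n_gt0)) //= big1 ?mulr1.
    by rewrite -(cnt_succ c (Ordinal n_gt0)).
  move=> i i0; rewrite ifF //; apply: contraNF i0 => /eqP i0.
  by apply/eqP/val_inj.
rewrite no_fixed /esf /dweight !big_split /=.
case: ifP => _; last by rewrite !mul0r mulr0.
by rewrite mul1r /ecoef; ring.
Qed.

Lemma dweight_series (rho : nat -> nat) (i : nat) : rho 1%N = 0%N ->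
  vanishes n (\sum_(x < n.+1) dweight (fun i x => (x ^_ rho i.+1)%:R) i x *: 'X^(i.+1 * x)
    - ((t / i.+1%:R) ^+ rho i.+1 *: 'X^(i.+1 * rho i.+1))
      * (if i == 0%N then 1 else cycle_factor n t i)).
Proof.
move=> rho1; case: i => [|i].
  rewrite rho1 big_ord_recl big1 => [|x _]; last first.
    by rewrite /dweight /= mulr0 mul0r scale0r.
  rewrite /dweight /ecoef /= rho1 !expr0 fact0 divr1 ffactn0 !mul1r mulr1 scale1r.
  by rewrite addr0 subrr; apply: vanishes0.
set a := t / i.+2%:R; set k := rho i.+2.
have -> : \sum_(x < n.+1) dweight (fun i x => (x ^_ rho i.+1)%:R) i.+1 x *: 'X^(i.+2 * x)
    = \sum_(0 <= x < n.+1) (ecoef a x * (x ^_ k)%:R) *: 'X^(i.+2 * x).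
  by rewrite big_mkord; apply: eq_bigr => x _; rewrite /dweight mulr1.
rewrite -scalerAl -texp_ffact -opprB; apply: vanishesN.
by apply: vanishes_tail => //; apply: leq_addr.
Qed.

Lemma derangement_moment_sum (rho : nat -> nat) : rho 1%N = 0%N ->
  \sum_(c : config n) esf t n c * (cnt c 1 == 0%N)%:R * \prod_(i < n) ((c i) ^_ (rho i.+1))%:R
  = n`!%:R / rising t n * ((\prod_(i < n) (t / i.+1%:R) ^+ rho i.+1) *:
      ('X^(\sum_(i < n) i.+1 * rho i.+1) * derangement_gf n t))`_n.
Proof.
move=> rho1.
under eq_bigr do rewrite (esf_derangement _ (fun i x => (x ^_ rho i.+1)%:R)).
rewrite -mulr_sumr config_sum_coef; congr (_ * _).
rewrite (vanishes_coef (vanishes_prod _ (fun i : 'I_n => dweight_series i rho1))) //.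
by rewrite big_split /= prod_scale_Xn -scalerAl.
Qed.

End DerangementSums.

Lemma rising_neq0 (R : numFieldType) (t : R) k : 0 < t -> rising t k != 0.
Proof.
move=> t_gt0; rewrite /rising; apply/lt0r_neq0/prodr_gt0 => i _.
by rewrite ltr_wpDr ?ler0n.
Qed.

Lemma derangement_gf_lambda (R : numFieldType) (t : R) n k :
  0 < t -> (0 < n)%N -> (k <= n)%N ->
  (derangement_gf n t)`_k = lambda t k * rising t k / k`!%:R.
Proof.
move=> t_gt0 n_gt0 kn; rewrite /lambda derangement_gf_coef //.
have rk := rising_neq0 k t_gt0.
have fk := natr_fact_neq0 R k.
rewrite (eq_bigr (fun j : 'I_k.+1 =>
    (-1) ^+ j * (t ^+ j / j`!%:R) * (rising t (k - j) / (k - j)`!%:R))).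
  by set S := \sum_(j < k.+1) _; field; rewrite fk rk.
by move=> j _; rewrite /ecoef -(mulN1r t) exprMn !mulrA.
Qed.

(* The moment sum for the cycle lengths 2..b: products over 2 <= j <= b are
   transported to products over all cycle lengths by [restrict]. *)
Lemma ffact_moment_sum (R : numFieldType) (t : R) n b (r : nat -> nat) :
  (0 < n)%N -> (b <= n)%N ->
  let m := (\sum_(2 <= j < b.+1) j * r j)%N in
  \sum_(c : config n) esf t n c * (cnt c 1 == 0%N)%:R *
    \prod_(2 <= j < b.+1) ((cnt c j) ^_ (r j))%:R
  = n`!%:R / rising t n * ((m <= n)%N%:R * \prod_(2 <= j < b.+1) (t / j%:R) ^+ r j *
      (derangement_gf n t)`_(n - m)).
Proof.
move=> n_gt0 bn m.
have -> : \sum_(c : config n) esf t n c * (cnt c 1 == 0%N)%:R *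
      \prod_(2 <= j < b.+1) ((cnt c j) ^_ (r j))%:R
    = \sum_(c : config n) esf t n c * (cnt c 1 == 0%N)%:R *
      \prod_(i < n) ((c i) ^_ (restrict b r i.+1))%:R.
  apply: eq_bigr => c _; congr (_ * _).
  rewrite -(big_restrict _ r (F := fun j e => ((cnt c j) ^_ e)%:R) bn) //.
  by apply: eq_bigr => i _; rewrite cnt_succ.
rewrite (derangement_moment_sum _ n_gt0 (rho := restrict b r)) //.
rewrite (big_restrict _ r (F := fun j e => (t / j%:R) ^+ e) bn) => [|j]; last exact: expr0.
rewrite (big_restrict _ r (F := fun j e => j * e)%N bn) => [|j]; last exact: muln0.
rewrite -/m coefZ coefXnM; congr (_ * _).
by case: ltnP => _; rewrite ?mulr0 ?mul0r ?mul1r.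
Qed.

(* The restricted expectation of a product of falling factorials, as a ratio
   of two coefficients of derangement_gf; the total mass is the case b = 0. *)
Lemma dexp_ffact (R : numFieldType) (t : R) n b (r : nat -> nat) :
  0 < t -> (0 < n)%N -> (b <= n)%N ->
  let m := (\sum_(2 <= j < b.+1) j * r j)%N in
  dexp t n (fun C => \prod_(2 <= j < b.+1) ((C j) ^_ (r j))%:R)
  = (m <= n)%N%:R * \prod_(2 <= j < b.+1) (t / j%:R) ^+ r j *
    (derangement_gf n t)`_(n - m) / (derangement_gf n t)`_n.
Proof.
move=> t_gt0 n_gt0 bn m.
have total : \sum_(c : config n) esf t n c * (cnt c 1 == 0%N)%:R
    = n`!%:R / rising t n * (derangement_gf n t)`_n.
  transitivity (\sum_(c : config n) esf t n c * (cnt c 1 == 0%N)%:R *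
                 \prod_(2 <= j < 1) ((cnt c j) ^_ 0)%:R).
    by apply: eq_bigr => c _; rewrite big_geq ?mulr1.
  by rewrite (ffact_moment_sum t (fun _ => 0%N) n_gt0 (leq0n n)) !big_geq // subn0 mulr1 mul1r.
have K_neq0 : n`!%:R / rising t n != 0.
  by rewrite mulf_neq0 ?invr_eq0 ?rising_neq0 ?natr_fact_neq0.
by rewrite /dexp ffact_moment_sum // total invfM mulrACA divff // mul1r.
Qed.

Lemma dexp_ext (R : fieldType) (t : R) n (f g : (nat -> nat) -> R) :
  (forall C, f C = g C) -> dexp t n f = dexp t n g.
Proof. by move=> fg; rewrite /dexp; congr (_ / _); apply: eq_bigr => c _; rewrite fg. Qed.

Lemma big_nat_indicator (T : Type) (idx : T) (op : Monoid.law idx) j (F : nat -> bool -> T) :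
  (2 <= j)%N -> (forall i, F i false = idx) ->
  \big[op/idx]_(2 <= i < j.+1) F i (i == j) = F j true.
Proof.
move=> j_ge2 F0; rewrite big_nat_recr //= eqxx big_nat_cond big1 ?Monoid.mul1m //.
by move=> i /andP[/andP[_ ij] _]; rewrite ltn_eqF.
Qed.

Theorem mainTheorem9 (R : realFieldType) (theta : R) (n b : nat) (r : nat -> nat) :
  0 < theta -> (2 <= n)%N -> (2 <= b <= n)%N ->
  let m := (\sum_(2 <= j < b.+1) j * r j)%N in
  dexp theta n (fun C => \prod_(2 <= j < b.+1) ((C j) ^_ (r j))%:R)
  = (m <= n)%N%:R * (n`!%:R / (lambda theta n * rising theta n)) *
    (lambda theta (n - m) * rising theta (n - m) / (n - m)`!%:R) *
    \prod_(2 <= j < b.+1) (theta / j%:R) ^+ r j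
  /\
  (forall j : nat, (2 <= j <= n)%N ->
    dexp theta n (fun C => (C j)%:R)
    = (n`!%:R / (lambda theta n * rising theta n)) *
      (lambda theta (n - j) * rising theta (n - j) / (n - j)`!%:R) *
      (theta / j%:R)).
Proof.
move=> theta_gt0 n_ge2 /andP[_ b_le_n] m.
have n_gt0 : (0 < n)%N by apply: leq_trans n_ge2.
have gf_coef k : (k <= n)%N ->
    lambda theta k * rising theta k / k`!%:R = (derangement_gf n theta)`_k.
  by move=> kn; rewrite derangement_gf_lambda.
have lambda_ratio :
    n`!%:R / (lambda theta n * rising theta n) = ((derangement_gf n theta)`_n)^-1.
  by rewrite -gf_coef // invf_div.
split.
  rewrite dexp_ffact // lambda_ratio gf_coef ?leq_subr //.
  by rewrite -/m; ring.
move=> j /andP[j_ge2 j_le_n].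
(* The single-length observable C_j is the case b = j, r = indicator of j. *)
rewrite (@dexp_ext _ _ _ _ (fun C => \prod_(2 <= i < j.+1) ((C i) ^_ (i == j))%:R));
  last by move=> C; rewrite (big_nat_indicator _ (F := fun i e => ((C i) ^_ e)%:R)) ?ffactn1.
rewrite dexp_ffact //.
rewrite (big_nat_indicator _ (F := fun i e => (i * e)%N)) => [|//|i]; last exact: muln0.
rewrite (big_nat_indicator _ (F := fun i e => (theta / i%:R) ^+ e)) // muln1 j_le_n.
by rewrite lambda_ratio gf_coef ?leq_subr // expr1 mul1r; ring.
Qed.
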